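(* Consider the following protocol. (1) Alice chooses $a\in\{0,1\}$ uniformly at random, prepares the two-qutrit state $\frac1{\sqrt2}|aa\rangle+\frac1{\sqrt2}|22\rangle$, and sends the second qutrit to Bob. (2) Bob chooses $x_0,x_1\in\{0,1\}$ uniformly at random, applies to the received qutrit the unitary $|0\rangle\mapsto(-1)^{x_0}|0\rangle$, $|1\rangle\mapsto(-1)^{x_1}|1\rangle$, $|2\rangle\mapsto|2\rangle$, and returns it to Alice. (3) Alice, who now holds $\frac{(-1)^{x_a}}{\sqrt2}|aa\rangle+\frac1{\sqrt2}|22\rangle$, performs a two-outcome measurement (depending on $a$) that reveals $x_a$ with certainty. Let $\delta\geq 0$ and $a\in\{0,1\}$. Suppose a cheating Alice, in place of step (1), prepares an arbitrary pure state $|\psi\rangle$ on a register of her own together with a qutrit, sends the qutrit to Bob, and that this state allows her (after Bob's step (2), with $x_0,x_1$ uniformly random) to guess $x_a$ correctly with probability at least $1-\delta$. Then $|\psi\rangle$ allows her to guess $x_{1-a}$ correctly with probability at most $\frac12+\sqrt{\delta(1-\delta)}+\delta$. In particular (taking $\delta=0$), $P^{\star}_{\mathrm{Alice}}=1/2$ for this protocol.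
   Context: $P^{\star}_{\mathrm{Alice}}$ denotes the maximum over $a\in\{0,1\}$ of the maximum, over cheating strategies of Alice that let her guess $x_a$ with certainty, of the probability that she correctly guesses $x_{1-a}$ and honest Bob, whose bits $x_0,x_1$ are uniformly random, does not abort. *)

(* Complex numbers: an arbitrary numClosedFieldType C
   (e.g. R[i] for a real closed field R, or algC). *)
From mathcomp Require Import all_boot all_order all_algebra.
Set Implicit Arguments. Unset Strict Implicit. Unset Printing Implicit Defensive.
Import Order.TTheory GRing.Theory Num.Theory.
Local Open Scope ring_scope.

Definition adj (C : numClosedFieldType) m n (A : 'M[C]_(m, n)) : 'M[C]_(n, m) :=
  map_mx (@Num.conj_op C) A^T.

Definition psdmx (C : numClosedFieldType) n (A : 'M[C]_n) : Prop :=
  A = adj A /\ forall v : 'cV[C]_n, 0 <= (adj v *m A *m v) 0 0.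

Definition povm (C : numClosedFieldType) n (I : finType) (M : I -> 'M[C]_n) : Prop :=
  (forall i, psdmx (M i)) /\ \sum_(i : I) M i = 1%:M.

(* A pure state on (Alice's n-dim register) (x) (qutrit): amplitude matrix
   Psi i j = <i,j|psi>, with unit norm. *)
Definition pure_state (C : numClosedFieldType) n (Psi : 'M[C]_(n, 3)) : Prop :=
  \sum_(i < n) \sum_(j < 3) `|Psi i j| ^+ 2 = 1.

Definition bob_unitary (C : numClosedFieldType) (x0 x1 : bool) : 'M[C]_3 :=
  diag_mx (\row_(j < 3) match val j with
                        | 0 => (-1) ^+ x0
                        | 1 => (-1) ^+ x1
                        | _ => 1 end).

(* joint state (ket in C^(n*3)) after Bob applies (I (x) U_{x0,x1}) *)
Definition after_bob (C : numClosedFieldType) n (Psi : 'M[C]_(n, 3)) (x0 x1 : bool)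
  : 'cV[C]_(n * 3) :=
  (mxvec (Psi *m bob_unitary C x0 x1))^T.

Definition prob (C : numClosedFieldType) m (E : 'M[C]_m) (v : 'cV[C]_m) : C :=
  (adj v *m E *m v) 0 0.

Definition bit (b x0 x1 : bool) : bool := if b then x1 else x0.

(* probability that Alice, measuring POVM M and outputting guess g i on
   outcome i, correctly guesses x_b, with x0,x1 uniform *)
Definition success (C : numClosedFieldType) n (Psi : 'M[C]_(n, 3)) (I : finType)
  (M : I -> 'M[C]_(n * 3)) (g : I -> bool) (b : bool) : C :=
  4^-1 * \sum_(x0 : bool) \sum_(x1 : bool)
           \sum_(i : I | g i == bit b x0 x1) prob (M i) (after_bob Psi x0 x1).

(* P*_Alice = p : maximum over a and over cheating strategies (n, Psi, joint
   POVM with outcome (guess of x0, guess of x1)) that let Alice guess x_a with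
   certainty, of the probability of guessing x_{1-a} (Bob never aborts). *)
Definition Pstar_Alice_is (C : numClosedFieldType) (p : C) : Prop :=
  (exists (a : bool) (n : nat) (Psi : 'M[C]_(n, 3)) (M : bool * bool -> 'M[C]_(n * 3)),
      [/\ pure_state Psi, povm M,
          success Psi M (fun g => bit a g.1 g.2) a = 1
        & success Psi M (fun g => bit (~~ a) g.1 g.2) (~~ a) = p])
  /\
  (forall (a : bool) (n : nat) (Psi : 'M[C]_(n, 3)) (M : bool * bool -> 'M[C]_(n * 3)),
      pure_state Psi -> povm M ->
      success Psi M (fun g => bit a g.1 g.2) a = 1 ->
      success Psi M (fun g => bit (~~ a) g.1 g.2) (~~ a) <= p).

(* Write the state as u0 + u1 + u2, u_j being its component with qutrit |j>;
   after Bob's unitary it is (-1)^x0 u0 + (-1)^x1 u1 + u2.  For a measurement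
   {1 - E, E} the probability of guessing x_b is 1/2 + Z_b, where
   Z_b = <u_b|E|u2> + <u2|E|u_b>.  As 0 <= E <= 1 and u_b is orthogonal to
   u2, polarization gives 2 t Z_b <= t^2 |u_b|^2 + |u2|^2 for all real t,
   hence Z_b^2 <= |u_b|^2 |u2|^2.  Guessing x_a with probability 1 - delta
   forces |u_a|^2 |u2|^2 >= (1/2 - delta)^2, and since the three weights sum
   to 1 this leaves Z_{1-a}^2 <= 1/4 - (1/2 - delta)^2 = delta (1 - delta).
   Any four-outcome strategy coarse-grains to two two-outcome ones, so with
   delta = 0 the value 1/2 bounds P*_Alice; it is attained by sending
   (|0> + |2>)/sqrt 2 and guessing x1 blindly. *)

From HB Require Import structures.
From mathcomp Require Import all_boot all_order all_algebra.
From mathcomp Require Import ring lra.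
Import Order.TTheory GRing.Theory Num.Theory.
Local Open Scope ring_scope.
Set Implicit Arguments. Unset Strict Implicit. Unset Printing Implicit Defensive.

(* The real elements of [C] form a real field, where [lra] and [nra] apply. *)
Section RealSubfield.
Variable C : numClosedFieldType.

Definition realsub := {x : C | x \is Num.real}.

HB.instance Definition _ := [isSub for (@proj1_sig C _) : realsub -> C].
HB.instance Definition _ := [Choice of realsub by <:].
HB.instance Definition _ := [SubChoice_isSubComUnitRing of realsub by <:].
HB.instance Definition _ := [SubComUnitRing_isSubIntegralDomain of realsub by <:].
HB.instance Definition _ := [SubIntegralDomain_isSubField of realsub by <:].

Let le (x y : realsub) := val x <= val y.
Let lt (x y : realsub) := val x < val y.
Let norm (x : realsub) : realsub := if 0 <= val x then x else - x.

Let le0_add x y : le 0 x -> le 0 y -> le 0 (x + y).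
Proof. exact: addr_ge0. Qed.

Let le0_mul x y : le 0 x -> le 0 y -> le 0 (x * y).
Proof. exact: mulr_ge0. Qed.

Let le0_anti x : le 0 x -> le x 0 -> x = 0.
Proof. by move=> x_ge0 x_le0; apply: val_inj; apply/eqP; rewrite eq_le; apply/andP. Qed.

Let sub_ge0 x y : le 0 (y - x) = le x y.
Proof. exact: subr_ge0. Qed.

Let le0_total x : le 0 x || le x 0.
Proof. by have := valP x; rewrite realE. Qed.

Let normN x : norm (- x) = norm x.
Proof.
have valN : val (- x) = - val x by [].
rewrite /norm valN oppr_ge0 opprK.
case: (boolP (0 <= val x)) => x_ge0; case: (boolP (val x <= 0)) => x_le0 //.
  have x0 : val x = 0 by apply/eqP; rewrite eq_le x_ge0 x_le0.
  by apply: val_inj; rewrite valN x0 oppr0.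
by have := valP x; rewrite realE (negbTE x_ge0) (negbTE x_le0).
Qed.

Let ge0_norm x : le 0 x -> norm x = x.
Proof. by rewrite /le /norm => ->. Qed.

Let lt_def x y : lt x y = (y != x) && le x y.
Proof. exact: lt_def. Qed.

HB.instance Definition _ := Num.IntegralDomain_isLeReal.Build realsub
  le0_add le0_mul le0_anti sub_ge0 le0_total normN ge0_norm lt_def.

Lemma realsub_leE (x y : realsub) : (x <= y) = (val x <= val y).
Proof. by []. Qed.

End RealSubfield.

Section RealInequalities.
Variable R : realFieldType.

Lemma sqr_le_of_quadratic_ge0 (Z p q : R) : 0 <= p -> 0 <= q ->
  (forall s, 2 * (s * Z) <= s * s * p + q) -> Z ^+ 2 <= p * q.
Proof.
move=> p_ge0 q_ge0 quad.
have [p0 | p_neq0] := eqVneq p 0.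
  have [-> | Z_neq0] := eqVneq Z 0; first by rewrite expr0n /= mulr_ge0.
  have := quad ((q + 1) / (2 * Z)).
  have -> : 2 * ((q + 1) / (2 * Z) * Z) = q + 1 by field; rewrite Z_neq0.
  rewrite p0 mulr0 add0r; lra.
have p_gt0 : 0 < p by rewrite lt_def p_neq0.
have := quad (Z / p); set t := Z / p.
have -> : Z = t * p by rewrite /t divfK.
nra.
Qed.

Lemma guessing_tradeoff (d Za Zb pa pb p2 s : R) :
  0 <= d -> 0 <= pa -> 0 <= pb -> 0 <= p2 -> pa + pb + p2 = 1 ->
  2^-1 - d <= Za ->
  (forall t, 2 * (t * Za) <= t * t * pa + p2) ->
  (forall t, 2 * (t * Zb) <= t * t * pb + p2) ->
  0 <= s -> s ^+ 2 = d * (1 - d) -> Zb <= s + d.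
Proof.
move=> d_ge0 pa_ge0 pb_ge0 p2_ge0 psum Za_ge quadA quadB s_ge0 s2.
have Zb_le : 2 * Zb <= pb + p2 by have := quadB 1; rewrite !mul1r.
have [d_ge | d_lt] := lerP (2^-1) d; first lra.
have ZaA := sqr_le_of_quadratic_ge0 pa_ge0 p2_ge0 quadA.
have ZbB := sqr_le_of_quadratic_ge0 pb_ge0 p2_ge0 quadB.
have Za2 : (2^-1 - d) ^+ 2 <= Za ^+ 2 by nra.
have Zb2 : Zb ^+ 2 <= s ^+ 2.
  rewrite s2; have p2_dev := sqr_ge0 (p2 - 2^-1).
  have pbE : pb = 1 - pa - p2 by lra.
  rewrite pbE in ZbB; nra.
have [Zb_le0 | Zb_gt0] := lerP Zb 0; first lra.
have : Zb <= s by nra.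
lra.
Qed.

End RealInequalities.

Lemma guessing_tradeoffC (C : numClosedFieldType) (d Za Zb pa pb p2 : C) :
  Za \is Num.real -> Zb \is Num.real ->
  0 <= d -> d <= 1 -> 0 <= pa -> 0 <= pb -> 0 <= p2 -> pa + pb + p2 = 1 ->
  2^-1 - d <= Za ->
  (forall t, t \is Num.real -> 2 * (t * Za) <= t * t * pa + p2) ->
  (forall t, t \is Num.real -> 2 * (t * Zb) <= t * t * pb + p2) ->
  Zb <= sqrtC (d * (1 - d)) + d.
Proof.
move=> ZaR ZbR d_ge0 d_le1 pa_ge0 pb_ge0 p2_ge0 psum Za_ge quadA quadB.
have s_ge0 : 0 <= sqrtC (d * (1 - d)) by rewrite sqrtC_ge0 mulr_ge0 ?subr_ge0.
pose lift x (xR : x \is Num.real) : realsub C := exist _ x xR.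
have lift_ge0 x (x_ge0 : 0 <= x) : 0 <= lift x (ger0_real x_ge0) by [].
have quad Z p ZR (pR : p \is Num.real) (quadZ : forall t, t \is Num.real ->
      2 * (t * Z) <= t * t * p + p2) t :
    2 * (t * lift Z ZR) <= t * t * lift p pR + lift p2 (ger0_real p2_ge0).
  by rewrite realsub_leE !(rmorphD, rmorphM, rmorph_nat) /= quadZ ?(valP t).
have psum' : lift pa (ger0_real pa_ge0) + lift pb (ger0_real pb_ge0)
    + lift p2 (ger0_real p2_ge0) = 1 by apply: val_inj; rewrite !rmorphD.
have Za_ge' : 2^-1 - lift d (ger0_real d_ge0) <= lift Za ZaR.
  by rewrite realsub_leE !(rmorphB, fmorphV, rmorph_nat).
have s2 : lift _ (ger0_real s_ge0) ^+ 2 =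
    lift d (ger0_real d_ge0) * (1 - lift d (ger0_real d_ge0)).
  by apply: val_inj; rewrite !(rmorphXn, rmorphM, rmorphB, rmorph1) /= sqrtCK.
have := guessing_tradeoff (lift_ge0 _ d_ge0) (lift_ge0 _ pa_ge0)
  (lift_ge0 _ pb_ge0) (lift_ge0 _ p2_ge0) psum' Za_ge' (quad _ _ ZaR _ quadA)
  (quad _ _ ZbR _ quadB) (lift_ge0 _ s_ge0) s2.
by rewrite realsub_leE rmorphD.
Qed.

Section Braket.
Variable C : numClosedFieldType.

Lemma adjD m n (A B : 'M[C]_(m, n)) : adj (A + B) = adj A + adj B.
Proof. by apply/matrixP => i j; rewrite !mxE rmorphD. Qed.

Lemma adjN m n (A : 'M[C]_(m, n)) : adj (- A) = - adj A.
Proof. by apply/matrixP => i j; rewrite !mxE rmorphN. Qed.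

Lemma adjZ m n (c : C) (A : 'M[C]_(m, n)) : adj (c *: A) = c^* *: adj A.
Proof. by apply/matrixP => i j; rewrite !mxE rmorphM. Qed.

Lemma adj0 m n : adj (0 : 'M[C]_(m, n)) = 0.
Proof. by apply/matrixP => i j; rewrite !mxE rmorph0. Qed.

Lemma adj1 n : adj (1%:M : 'M[C]_n) = 1%:M.
Proof. by apply/matrixP => i j; rewrite !mxE rmorph_nat eq_sym. Qed.

Lemma adjK m n (A : 'M[C]_(m, n)) : adj (adj A) = A.
Proof. by apply/matrixP => i j; rewrite !mxE conjCK. Qed.

Lemma adjM m n p (A : 'M[C]_(m, n)) (B : 'M[C]_(n, p)) :
  adj (A *m B) = adj B *m adj A.
Proof. by rewrite /adj trmx_mul map_mxM. Qed.

Lemma adj_sum m n (I : finType) (P : pred I) (F : I -> 'M[C]_(m, n)) :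
  adj (\sum_(i | P i) F i) = \sum_(i | P i) adj (F i).
Proof.
apply/matrixP => i j; rewrite !mxE !summxE rmorph_sum.
by apply: eq_bigr => k _; rewrite !mxE.
Qed.

Definition braket m (E : 'M[C]_m) (x y : 'cV[C]_m) : C := (adj x *m E *m y) 0 0.

Lemma braketDl m (E : 'M[C]_m) x y z : braket E (x + y) z = braket E x z + braket E y z.
Proof. by rewrite /braket adjD !mulmxDl mxE. Qed.

Lemma braketDr m (E : 'M[C]_m) x y z : braket E z (x + y) = braket E z x + braket E z y.
Proof. by rewrite /braket !mulmxDr mxE. Qed.

Lemma braketNl m (E : 'M[C]_m) x z : braket E (- x) z = - braket E x z.
Proof. by rewrite /braket adjN !mulNmx mxE. Qed.

Lemma braketNr m (E : 'M[C]_m) x z : braket E z (- x) = - braket E z x.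
Proof. by rewrite /braket !mulmxN mxE. Qed.

Lemma braketZl m (E : 'M[C]_m) c x z : braket E (c *: x) z = c^* * braket E x z.
Proof. by rewrite /braket adjZ -!scalemxAl mxE. Qed.

Lemma braketZr m (E : 'M[C]_m) c x z : braket E z (c *: x) = c * braket E z x.
Proof. by rewrite /braket -scalemxAr mxE. Qed.

Lemma braket0 m (x y : 'cV[C]_m) : braket 0 x y = 0.
Proof. by rewrite /braket mulmx0 mul0mx mxE. Qed.

Lemma braketB m (E F : 'M[C]_m) x z : braket (E - F) x z = braket E x z - braket F x z.
Proof. by rewrite /braket mulmxDr mulmxN mulmxDl mulNmx mxE [X in _ + X]mxE. Qed.

Lemma braket_sum m (I : finType) (P : pred I) (F : I -> 'M[C]_m) x z :
  braket (\sum_(i | P i) F i) x z = \sum_(i | P i) braket (F i) x z.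
Proof. by rewrite /braket mulmx_sumr mulmx_suml summxE. Qed.

Lemma conj_braket m (E : 'M[C]_m) x y : (braket E x y)^* = braket (adj E) y x.
Proof.
rewrite /braket; transitivity (adj (adj x *m E *m y) 0 0); first by rewrite !mxE.
by rewrite !adjM adjK mulmxA.
Qed.

Lemma braket_norm_ge0 m (x : 'cV[C]_m) : 0 <= braket 1%:M x x.
Proof.
rewrite /braket mulmx1 mxE; apply: sumr_ge0 => k _.
by rewrite !mxE mulrC -normCK exprn_ge0.
Qed.

Lemma braket_outer m (phi x y : 'cV[C]_m) :
  braket (phi *m adj phi) x y = braket 1%:M x phi * braket 1%:M phi y.
Proof.
by rewrite /braket !mulmx1 mulmxA -(mulmxA (adj x *m phi)) [in LHS]mxE big_ord1.
Qed.

End Braket.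

Section Effects.
Variable C : numClosedFieldType.

Definition effect m (E : 'M[C]_m) : Prop := psdmx E /\ psdmx (1%:M - E).

Definition interference m (E : 'M[C]_m) (x y : 'cV[C]_m) : C :=
  braket E x y + braket E y x.

Lemma interference_real m (E : 'M[C]_m) x y :
  E = adj E -> interference E x y \is Num.real.
Proof.
move=> E_herm; apply/CrealP.
by rewrite /interference rmorphD /= !conj_braket -E_herm addrC.
Qed.

Lemma effect_interference_le m (E : 'M[C]_m) x y (s : C) : effect E -> s^* = s ->
  braket 1%:M x y = 0 -> braket 1%:M y x = 0 ->
  2 * (s * interference E x y) <= s * s * braket 1%:M x x + braket 1%:M y y.
Proof.
move=> [[_ E_ge0] [_ E_le1]] s_real xy0 yx0.
set u := s *: x.
have polar : 2 * (s * interference E x y) = braket E (u + y) (u + y) - braket E (u - y) (u - y).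
  rewrite /interference /u !(braketDl, braketDr, braketNl, braketNr, braketZl, braketZr) s_real.
  ring.
have norm_sum : s * s * braket 1%:M x x + braket 1%:M y y = braket 1%:M (u + y) (u + y).
  rewrite /u !(braketDl, braketDr, braketZl, braketZr) s_real xy0 yx0; ring.
rewrite polar norm_sum -[leRHS]addr0 lerD ?oppr_le0 ?E_ge0 //.
by rewrite -subr_ge0 -braketB; apply: E_le1.
Qed.

Lemma povm_bool_effect m (M : bool -> 'M[C]_m) : povm M ->
  M true = 1%:M - M false /\ effect (M false).
Proof.
move=> [M_psd]; rewrite big_bool /= => M_sum.
have M_true : M true = 1%:M - M false by rewrite -M_sum addrK.
split=> //; split; first exact: M_psd.
by rewrite -M_true; exact: M_psd.
Qed.

Lemma effect_projector m (phi : 'cV[C]_m) : braket 1%:M phi phi = 1 ->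
  effect (phi *m adj phi).
Proof.
move=> phi_unit.
have herm : phi *m adj phi = adj (phi *m adj phi) by rewrite adjM adjK.
have conj_phi z : braket 1%:M z phi = (braket 1%:M phi z)^* by rewrite conj_braket adj1.
split; split.
- exact: herm.
- move=> v; rewrite -/(braket _ v v) braket_outer conj_phi mulrC -normCK.
  exact: exprn_ge0.
- by rewrite adjD adjN adj1 -herm.
- move=> v; rewrite -/(braket _ v v) braketB braket_outer conj_phi.
  set w := braket 1%:M phi v.
  have <- : braket 1%:M (v - w *: phi) (v - w *: phi) = braket 1%:M v v - w^* * w.
    by rewrite !(braketDl, braketDr, braketNl, braketNr, braketZl, braketZr)
      phi_unit conj_phi -/w; ring.
  exact: braket_norm_ge0.
Qed.

End Effects.

Section QutritBranches.
Variables (C : numClosedFieldType) (n : nat).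
Implicit Type Psi : 'M[C]_(n, 3).

Definition q0 : 'I_3 := @Ordinal 3 0 isT.
Definition q1 : 'I_3 := @Ordinal 3 1 isT.
Definition q2 : 'I_3 := @Ordinal 3 2 isT.

Definition qbit (b : bool) : 'I_3 := if b then q1 else q0.

(* The component of the joint state whose qutrit is [|j>]. *)
Definition branch Psi (j : 'I_3) : 'cV[C]_(n * 3) := (mxvec (Psi *m delta_mx j j))^T.

Definition weight Psi (j : 'I_3) : C := \sum_(i < n) `|Psi i j| ^+ 2.

Lemma weight_ge0 Psi j : 0 <= weight Psi j.
Proof. by apply: sumr_ge0 => i _; rewrite exprn_ge0. Qed.

Lemma norm_weights Psi :
  \sum_(i < n) \sum_(j < 3) `|Psi i j| ^+ 2 = weight Psi q0 + weight Psi q1 + weight Psi q2.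
Proof.
rewrite exchange_big /= !big_ord_recl big_ord0 addr0 addrA.
by congr (_ + _ + _); apply: eq_bigr => i _; congr (`|Psi i _| ^+ 2); apply: val_inj.
Qed.

Lemma braket1_mxvec (A B : 'M[C]_(n, 3)) :
  braket 1%:M (mxvec A)^T (mxvec B)^T = \sum_i \sum_j (A i j)^* * B i j.
Proof.
rewrite /braket mulmx1 mxE (reindex _ (curry_mxvec_bij n 3)) /= pair_bigA /=.
by apply: eq_bigr => -[i j] _; rewrite !mxE !mxvecE.
Qed.

Lemma braket_branch Psi j k :
  braket 1%:M (branch Psi j) (branch Psi k) = (j == k)%:R * weight Psi j.
Proof.
have entry l i m : (Psi *m delta_mx l l) i m = (m == l)%:R * Psi i l.
  rewrite mxE (bigD1 l) //= big1 => [|p /negbTE p_l].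
    by rewrite mxE eqxx /= addr0 mulrC.
  by rewrite mxE p_l mulr0.
rewrite braket1_mxvec /weight; under eq_bigr do under eq_bigr do
  rewrite !entry rmorphM rmorph_nat mulrACA -natrM mulnb.
have [<- | /negbTE j_k] := eqVneq j k.
  rewrite mul1r; apply: eq_bigr => i _.
  rewrite (bigD1 j) //= big1 => [|l /negbTE ->]; last by rewrite mul0r.
  by rewrite eqxx addr0 mul1r mulrC -normCK.
rewrite mul0r big1 // => i _; apply: big1 => l _.
by have [-> | _] := eqVneq l j; rewrite ?j_k mul0r.
Qed.

Lemma after_bobE Psi x0 x1 : after_bob Psi x0 x1 =
  (-1) ^+ x0 *: branch Psi q0 + (-1) ^+ x1 *: branch Psi q1 + branch Psi q2.
Proof.
have bobE : bob_unitary C x0 x1 =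
    (-1) ^+ x0 *: delta_mx q0 q0 + (-1) ^+ x1 *: delta_mx q1 q1 + delta_mx q2 q2.
  apply/matrixP => i j; rewrite !mxE.
  by case: i => [[|[|[|i]]] hi] //; case: j => [[|[|[|j]]] hj] //=; ring.
by rewrite /after_bob bobE !mulmxDr -!scalemxAr !linearD !linearZ.
Qed.

End QutritBranches.

Section Guessing.
Variable C : numClosedFieldType.

Lemma success_two_outcome n (Psi : 'M[C]_(n, 3)) (M : bool -> 'M[C]_(n * 3)) b :
  pure_state Psi -> M true = 1%:M - M false ->
  success Psi M id b = 2^-1 + interference (M false) (branch Psi (qbit b)) (branch Psi q2).
Proof.
rewrite /pure_state norm_weights => weights M_true.
have probE v E : prob E v = braket E v v by [].
rewrite /success !big_bool /= !big_pred1_eq !probE !after_bobE /interference.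
have w2 : weight Psi q2 = 1 - weight Psi q0 - weight Psi q1 by rewrite -weights; ring.
case: b; rewrite /= M_true !expr0 !expr1 !scale1r !scaleN1r
  !(braketDl, braketDr, braketNl, braketNr, braketB) !braket_branch /= w2; by field.
Qed.

Lemma success_coarse n (Psi : 'M[C]_(n, 3)) (I : finType) (M : I -> 'M[C]_(n * 3))
    (g : I -> bool) b :
  success Psi M g b = success Psi (fun c => \sum_(i | g i == c) M i) id b.
Proof.
rewrite /success; congr (_ * _); apply: eq_bigr => x0 _; apply: eq_bigr => x1 _.
by rewrite /= big_pred1_eq /prob -/(braket _ _ _) braket_sum.
Qed.

Lemma povm_coarse m (I : finType) (M : I -> 'M[C]_m) (g : I -> bool) :
  povm M -> povm (fun c => \sum_(i | g i == c) M i).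
Proof.
move=> [M_psd M_sum]; split.
  move=> c; split.
    by rewrite adj_sum; apply: eq_bigr => i _; have [] := M_psd i.
  move=> v; rewrite -/(braket _ v v) braket_sum.
  by apply: sumr_ge0 => i _; have [_] := M_psd i; apply.
rewrite big_bool /= -M_sum [RHS](bigID g) /=.
by congr (_ + _); apply: eq_bigl => i; [rewrite eqb_id | rewrite eqbF_neg].
Qed.

End Guessing.

Section Bound.
Variables (C : numClosedFieldType) (n : nat) (Psi : 'M[C]_(n, 3)).

Lemma interference_branch_le (E : 'M[C]_(n * 3)) b (t : C) : effect E -> t \is Num.real ->
  2 * (t * interference E (branch Psi (qbit b)) (branch Psi q2))
    <= t * t * weight Psi (qbit b) + weight Psi q2.
Proof.
move=> effE /CrealP t_real; have qb_q2 : qbit b != q2 by case: b.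
have norm_b := braket_branch Psi (qbit b) (qbit b); rewrite eqxx mul1r in norm_b.
have norm_2 := braket_branch Psi q2 q2; rewrite eqxx mul1r in norm_2.
rewrite -norm_b -norm_2; apply: effect_interference_le => //.
- by rewrite braket_branch (negbTE qb_q2) mul0r.
- by rewrite braket_branch eq_sym (negbTE qb_q2) mul0r.
Qed.

Lemma success_other_bit_le (delta : C) a (M M' : bool -> 'M[C]_(n * 3)) :
  0 <= delta -> delta <= 1 -> pure_state Psi -> povm M -> povm M' ->
  1 - delta <= success Psi M id a ->
  success Psi M' id (~~ a) <= 2^-1 + sqrtC (delta * (1 - delta)) + delta.
Proof.
move=> d_ge0 d_le1 pure /povm_bool_effect [M_true effM] /povm_bool_effect [M'_true effM'].
rewrite (success_two_outcome _ pure M_true) => succ_a.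
rewrite (success_two_outcome _ pure M'_true) -addrA lerD2l.
have weights : weight Psi (qbit a) + weight Psi (qbit (~~ a)) + weight Psi q2 = 1.
  by move: pure; rewrite /pure_state norm_weights => <-; case: (a) => /=; ring.
apply: (guessing_tradeoffC (Za := interference (M false) (branch Psi (qbit a)) (branch Psi q2))
  _ _ d_ge0 d_le1 (weight_ge0 _ _) (weight_ge0 _ _)
  (weight_ge0 _ _) weights).
- by apply: interference_real; case: effM => [[herm _] _].
- by apply: interference_real; case: effM' => [[herm _] _].
- have half : 1 - delta = 2^-1 + (2^-1 - delta) by field.
  by rewrite half lerD2l in succ_a.
- by move=> t; apply: interference_branch_le.
- by move=> t; apply: interference_branch_le.
Qed.

End Bound.

Section Attained.
Variable C : numClosedFieldType.

Lemma sum_pair (V : zmodType) (F : bool * bool -> V) :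
  \sum_p F p = F (true, true) + F (true, false) + (F (false, true) + F (false, false)).
Proof.
rewrite (eq_bigr (fun p => F (p.1, p.2))); last by case.
by rewrite -(pair_bigA _ (fun i j => F (i, j))) /= !big_bool.
Qed.

(* Send [(|0> + |2>)/sqrt 2] with a trivial private register, read [x0] off the
   projector onto that state, and always guess [x1 = false]. *)
Lemma certain_guess_half : exists (a : bool) (n : nat) (Psi : 'M[C]_(n, 3))
    (M : bool * bool -> 'M[C]_(n * 3)),
  [/\ pure_state Psi, povm M,
      success Psi M (fun g => bit a g.1 g.2) a = 1
    & success Psi M (fun g => bit (~~ a) g.1 g.2) (~~ a) = 2^-1].
Proof.
set r := sqrtC (2^-1 : C).
have r_ge0 : 0 <= r by rewrite sqrtC_ge0 invr_ge0 ler0n.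
have rr : r * r = 2^-1 by rewrite -expr2 sqrtCK.
pose Psi : 'M[C]_(1, 3) := \matrix_(i, j) (if j == q1 then 0 else r).
have w0 : weight Psi q0 = 2^-1 by rewrite /weight big_ord1 mxE /= ger0_norm // expr2 rr.
have w1 : weight Psi q1 = 0 by rewrite /weight big_ord1 mxE /= normr0 expr0n.
have w2 : weight Psi q2 = 2^-1 by rewrite /weight big_ord1 mxE /= ger0_norm // expr2 rr.
have pure : pure_state Psi by rewrite /pure_state norm_weights w0 w1 w2; field.
pose phi := branch Psi q0 + branch Psi q2.
have phi_unit : braket 1%:M phi phi = 1.
  by rewrite /phi !(braketDl, braketDr) !braket_branch /= w0 w2; field.
have [P_psd P'_psd] := effect_projector phi_unit.
pose P := phi *m adj phi.
pose M (g : bool * bool) : 'M[C]_(1 * 3) := if g.2 then 0 else if g.1 then 1%:M - P else P.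
have zero_psd : psdmx (0 : 'M[C]_(1 * 3)).
  by split=> [|v]; rewrite ?adj0 // -/(braket _ v v) braket0.
have povmM : povm M.
  split; first by case=> [[] []].
  by rewrite sum_pair /M /= !add0r subrK.
exists false, 1%N, Psi, M; split => //.
- rewrite success_coarse.
  have [M_true _] := povm_bool_effect (povm_coarse (fun g => bit false g.1 g.2) povmM).
  rewrite (success_two_outcome _ pure M_true) /interference /= !braket_sum.
  do 2!rewrite big_mkcond sum_pair; rewrite /M /= !braket0.
  by rewrite !braket_outer /phi !(braketDl, braketDr) !braket_branch /= w0 w2; field.
- rewrite success_coarse.
  have [M_true _] := povm_bool_effect (povm_coarse (fun g => bit true g.1 g.2) povmM).
  rewrite (success_two_outcome _ pure M_true) /interference /= !braket_sum.
  do 2!rewrite big_mkcond sum_pair; rewrite /M /= ?braket0.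
  by rewrite !braketB !braket_outer /phi !(braketDl, braketDr) !braket_branch /= w0 w1 w2; field.
Qed.

End Attained.

Theorem proposition6 (C : numClosedFieldType) :
  (forall (delta : C) (a : bool) (n : nat) (Psi : 'M[C]_(n, 3)),
      0 <= delta -> delta <= 1 -> pure_state Psi ->
      (exists M : bool -> 'M[C]_(n * 3), povm M /\ 1 - delta <= success Psi M id a) ->
      forall M' : bool -> 'M[C]_(n * 3), povm M' ->
        success Psi M' id (~~ a) <= 2^-1 + sqrtC (delta * (1 - delta)) + delta)
  /\ Pstar_Alice_is (2^-1 : C).
Proof.
split=> [delta a n Psi d_ge0 d_le1 pure [M [povmM succ]] M' povmM'|].
  exact: success_other_bit_le d_ge0 d_le1 pure povmM povmM' succ.
split=> [|a n Psi M pure povmM certain]; first exact: certain_guess_half.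
have coarse b := povm_coarse (fun g => bit b g.1 g.2) povmM.
have certain' : 1 - 0 <= success Psi (fun c => \sum_(g | bit a g.1 g.2 == c) M g) id a.
  by rewrite subr0 -success_coarse certain.
have := success_other_bit_le (lexx 0) ler01 pure (coarse a) (coarse (~~ a)) certain'.
by rewrite mul0r sqrtC0 !addr0 -success_coarse.
Qed.
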